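(* Let $X$ be a real Banach space. The following statements are equivalent. (1) $X$ is LUR. (2) $r(P_{S_X}(x,\frac1n),P_{S_X}(x',\frac1n))\to\left\|\frac{x}{\|x\|}-\frac{x'}{\|x'\|}\right\|$ for every $x,x'\in X\setminus\{0\}$. (3) $\mathrm{diam}(P_{S_X}(x,\frac1n))\to0$ for every $x\in X\setminus\{0\}$. (4) For every $x\in X\setminus\{0\}$, every minimizing sequence in $S_X$ for $x$ converges to $\frac{x}{\|x\|}$. (5) For every $x\in X\setminus\{0\}$, $P_{S_X}(x)=\{\frac{x}{\|x\|}\}$ and $P_{S_X}(x,\frac1n)\xrightarrow{V}P_{S_X}(x)$. (6) For every $x\in X\setminus\{0\}$, $P_{S_X}(x)=\{\frac{x}{\|x\|}\}$ and $P_{S_X}(x,\frac1n)\xrightarrow{H}P_{S_X}(x)$. (7) $S_X$ is strongly Chebyshev on $X\setminus\{0\}$.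
   Context: $B_X,S_X$ are the closed unit ball and unit sphere of $X$. For non-empty closed $A\subseteq X$, $x\in X$, $\delta\ge0$: $P_A(x,\delta)=\{y\in A:\|x-y\|\le\inf_{z\in A}\|x-z\|+\delta\}$, $P_A(x)=P_A(x,0)$. A minimizing sequence in $A$ for $x$ is a sequence $(y_n)$ in $A$ with $\|x-y_n\|\to\inf_{z\in A}\|x-z\|$. $A$ is strongly Chebyshev on $D$ if for each $x\in D$, $P_A(x)$ is a singleton and for every $\epsilon>0$ there is $\delta>0$ with $P_A(x,\delta)\subseteq P_A(x)+\epsilon B_X$. For non-empty bounded $A,B$, $r(A,B)=\sup\{\|a-b\|:a\in A,b\in B\}$. $X$ is LUR if $x_n\to x$ whenever $x\in S_X$, $(x_n)\subseteq S_X$ and $\|\frac{x_n+x}{2}\|\to1$. For closed bounded sets $C_n,C_0$: $C_n\xrightarrow{V}C_0$ means both (a) for every open $U\supseteq C_0$, eventually $C_n\subseteq U$, and (b) for every open $U$ with $C_0\cap U\ne\emptyset$, eventually $C_n\cap U\neq\emptyset$; $C_n\xrightarrow{H}C_0$ means for every $\epsilon>0$, eventually $C_n\subseteq C_0+\epsilon B_X$ and $C_0\subseteq C_n+\epsilon B_X$. *)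

From HB Require Import structures.
From mathcomp Require Import all_boot all_order all_algebra.
From mathcomp Require Import all_classical all_reals all_analysis.
Set Implicit Arguments. Unset Strict Implicit. Unset Printing Implicit Defensive.
Import Order.TTheory GRing.Theory Num.Theory.
Import numFieldNormedType.Exports.
Local Open Scope classical_set_scope.
Local Open Scope ring_scope.

Section Defs.
Context {R : realType} {X : normedModType R}.

Definition unit_ball : set X := [set x | `|x| <= 1].
Definition unit_sphere : set X := [set x | `|x| = 1].

Definition dist_set (A : set X) (x : X) : R := inf [set `|x - z| | z in A].

Definition Pnear (A : set X) (x : X) (delta : R) : set X :=
  [set y | A y /\ `|x - y| <= dist_set A x + delta].

Definition Pbest (A : set X) (x : X) : set X := Pnear A x 0.

Definition enlarge (A : set X) (eps : R) : set X :=
  [set y | exists2 a, A a & `|y - a| <= eps].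

Definition diam (A : set X) : R := sup [set `|a - b| | a in A & b in A].

Definition rAB (A B : set X) : R := sup [set `|a - b| | a in A & b in B].

Definition minimizing_seq (A : set X) (x : X) (y : nat -> X) : Prop :=
  (forall n, A (y n)) /\ ((fun n => `|x - y n|) @ \oo --> dist_set A x).

Definition strongly_chebyshev_on (A D : set X) : Prop :=
  forall x, D x ->
    (exists y, Pbest A x = [set y]) /\
    (forall eps : R, 0 < eps -> exists2 delta : R, 0 < delta &
       Pnear A x delta `<=` enlarge (Pbest A x) eps).

Definition LUR : Prop :=
  forall (x : X) (xn : nat -> X), `|x| = 1 -> (forall n, `|xn n| = 1) ->
    (fun n => `|(2 : R)^-1 *: (xn n + x)|) @ \oo --> (1 : R) ->
    xn @ \oo --> x.

Definition vietoris_cvg (C : nat -> set X) (C0 : set X) : Prop :=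
  (forall U : set X, open U -> C0 `<=` U -> \forall n \near \oo, C n `<=` U) /\
  (forall U : set X, open U -> C0 `&` U !=set0 ->
     \forall n \near \oo, C n `&` U !=set0).

Definition hausdorff_cvg (C : nat -> set X) (C0 : set X) : Prop :=
  forall eps : R, 0 < eps -> \forall n \near \oo,
    C n `<=` enlarge C0 eps /\ C0 `<=` enlarge (C n) eps.

End Defs.

From HB Require Import structures.
From mathcomp Require Import all_boot all_order all_algebra.
From mathcomp Require Import all_classical all_reals all_analysis.
From mathcomp Require Import lra.
Import Order.TTheory GRing.Theory Num.Theory.
Import numFieldNormedType.Exports.
Local Open Scope classical_set_scope.
Local Open Scope ring_scope.
Set Implicit Arguments. Unset Strict Implicit.

(* Apart from LUR, each statement is equivalent, point by point, to the
   approximate nearest points P_S(x, d) shrinking to u = x/|x| as d -> 0, and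
   these equivalences hold for nearest points in an arbitrary set. LUR is tied
   to minimizing sequences by the estimate
   m (2 - |z + u|) <= |x - z| - d(x, S) for |z| = 1, with m = min(1, |x|):
   along a minimizing sequence the midpoints with u tend to the sphere.
   Conversely, if |(x_n + x)/2| -> 1, the normalized midpoints form a
   minimizing sequence for x/2, so they tend to x, and hence so does x_n. *)

Section NearestPoints.
Context {R : realType} {X : normedModType R}.
Implicit Types (A : set X) (x y a : X).

Definition Pnear_shrinks_to A x a := forall e : R, 0 < e ->
  exists2 d : R, 0 < d & forall y, Pnear A x d y -> `|y - a| <= e.

Lemma near_natSinv_le (d : R) : 0 < d -> \forall n \near \oo, n.+1%:R^-1 <= d.
Proof. by move=> d0; apply: filterS (near_infty_natSinv_lt (PosNum d0)) => n /ltW. Qed.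

Lemma dist_set_le A x y : A y -> dist_set A x <= `|x - y|.
Proof.
move=> Ay; apply: ge_inf; last by exists y.
by exists 0 => _ [z _ <-].
Qed.

Lemma Pnear_dist_le A x d y : Pnear A x d y -> `|dist_set A x - `|x - y| | <= d.
Proof.
move=> [Ay le_xy]; have := dist_set_le x Ay.
rewrite ler_norml; lra.
Qed.

Lemma Pnear_le A x d d' : d <= d' -> Pnear A x d `<=` Pnear A x d'.
Proof. by move=> le_dd' y [Ay le_xy]; split => //; rewrite (le_trans le_xy) ?lerD2l. Qed.

Lemma Pbest_Pnear A x d a : 0 <= d -> Pbest A x a -> Pnear A x d a.
Proof. by move=> d0; apply: Pnear_le. Qed.

Lemma Pnear_pair_dist_ubound A A' x x' d d' :
  has_ubound [set `|a - b| | a in Pnear A x d & b in Pnear A' x' d'].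
Proof.
exists (dist_set A x + d + `|x - x'| + (dist_set A' x' + d')).
move=> _ [a [_ le_xa] [b [_ le_x'b] <-]].
have := ler_distD x a b; have := ler_distD x' x b.
rewrite [`|a - x|]distrC; lra.
Qed.

Lemma shrinks_minimizing_cvg A x a : Pnear_shrinks_to A x a ->
  forall y : nat -> X, minimizing_seq A x y -> y @ \oo --> a.
Proof.
move=> shr y [Ay cvy]; apply/cvgrPdist_le => e e0.
have [d d0 Pd] := shr e e0.
move/cvgrPdist_le: cvy => /(_ d d0); apply: filterS => n le_d.
rewrite distrC; apply: Pd; split => //.
by move: le_d; rewrite ler_norml; lra.
Qed.

Lemma minimizing_cvg_shrinks A x a :
  (forall y : nat -> X, minimizing_seq A x y -> y @ \oo --> a) ->
  Pnear_shrinks_to A x a.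
Proof.
move=> mincvg e e0; apply: contrapT => noshr.
have far n : exists y, Pnear A x n.+1%:R^-1 y /\ e < `|y - a|.
  apply: contrapT => nofar; apply: noshr; exists n.+1%:R^-1 => // y Py.
  by rewrite leNgt; apply/negP => lt_e; apply: nofar; exists y.
have [y Py] := choice far.
have cvy : y @ \oo --> a.
  apply: mincvg; split => [n|]; first by case: (Py n) => -[].
  apply/cvgrPdist_le => d d0; apply: filterS (near_natSinv_le d0) => n.
  exact/le_trans/Pnear_dist_le/(Py n).1.
move/cvgrPdist_le: cvy => /(_ e e0) /filter_ex [n].
by rewrite distrC leNgt (Py n).2.
Qed.

Lemma shrinks_Pbest A x a : Pbest A x a -> Pnear_shrinks_to A x a ->
  Pbest A x = [set a].
Proof.
move=> Pa shr; apply/seteqP; split => [y Py|_ ->] //=.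
apply/eqP; rewrite -subr_eq0 -normr_le0; apply/ler_addgt0Pr => e e0.
have [d d0 Pd] := shr e e0.
by rewrite add0r; apply/Pd/(Pnear_le (ltW d0)).
Qed.

Lemma shrinks_vietoris A x a : Pbest A x a -> Pnear_shrinks_to A x a ->
  vietoris_cvg (fun n => Pnear A x n.+1%:R^-1) [set a].
Proof.
move=> Pa shr; split => [U oU aU|U _ [_ [-> Ua]]].
- have /nbhs_ballP [r r0 ballU] : nbhs a U.
    by apply: open_nbhs_nbhs; split; last exact: aU.
  have r2 : 0 < r / 2 by rewrite divr_gt0.
  have [d d0 Pd] := shr _ r2.
  apply: filterS (near_natSinv_le d0) => n le_d y Py; apply: ballU.
  rewrite -ball_normE /ball_ /= distrC.
  by have := Pd y (Pnear_le le_d Py); move: r0 => /=; lra.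
- by apply: nearW => n; exists a; split => //; apply: Pbest_Pnear.
Qed.

Lemma vietoris_shrinks A x a :
  vietoris_cvg (fun n => Pnear A x n.+1%:R^-1) [set a] -> Pnear_shrinks_to A x a.
Proof.
move=> [V _] e e0.
have [|n Pn] := filter_ex (V (ball a e) (ball_open _ _) _).
  by move=> _ ->; apply: ballxx.
exists n.+1%:R^-1 => // y /Pn; rewrite -ball_normE /ball_ /= distrC.
exact: ltW.
Qed.

Lemma shrinks_hausdorff A x a : Pbest A x a -> Pnear_shrinks_to A x a ->
  hausdorff_cvg (fun n => Pnear A x n.+1%:R^-1) [set a].
Proof.
move=> Pa shr e e0; have [d d0 Pd] := shr e e0.
apply: filterS (near_natSinv_le d0) => n le_d; split => [y Py|_ ->].
- by exists a => //; apply: Pd; apply: Pnear_le Py.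
- by exists a; [apply: Pbest_Pnear | rewrite subrr normr0 ltW].
Qed.

Lemma hausdorff_shrinks A x a :
  hausdorff_cvg (fun n => Pnear A x n.+1%:R^-1) [set a] -> Pnear_shrinks_to A x a.
Proof.
move=> H e e0; have [n [Pn _]] := filter_ex (H e e0).
by exists n.+1%:R^-1 => // y /Pn [_ ->].
Qed.

Lemma shrinks_chebyshev A x a : Pbest A x = [set a] -> Pnear_shrinks_to A x a ->
  strongly_chebyshev_on A [set x].
Proof.
move=> PB shr _ ->; split; first by exists a.
move=> e e0; have [d d0 Pd] := shr e e0.
by exists d => // y Py; rewrite PB; exists a => //; apply: Pd.
Qed.

Lemma chebyshev_shrinks A D x a : D x -> Pbest A x a ->
  strongly_chebyshev_on A D -> Pnear_shrinks_to A x a.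
Proof.
move=> Dx Pa /(_ x Dx) [[b PB] near_b] e e0.
have ab : a = b by move: Pa; rewrite PB.
have [d d0 Pd] := near_b e e0; rewrite PB -ab in Pd.
by exists d => // y /Pd [_ ->].
Qed.

Lemma diam_cvg0_shrinks A x a : Pbest A x a ->
  (fun n => diam (Pnear A x n.+1%:R^-1)) @ \oo --> 0 -> Pnear_shrinks_to A x a.
Proof.
move=> Pa /cvgrPdist_le diam0 e e0.
have [n] := filter_ex (diam0 e e0); rewrite sub0r normrN => le_e.
exists n.+1%:R^-1 => // y Py; apply: le_trans le_e; apply: le_trans (ler_norm _).
apply: ub_le_sup; first exact: Pnear_pair_dist_ubound.
by exists y => //; exists a => //; apply: Pbest_Pnear.
Qed.

Lemma shrinks_rAB A A' x x' a a' : Pbest A x a -> Pbest A' x' a' ->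
  Pnear_shrinks_to A x a -> Pnear_shrinks_to A' x' a' ->
  (fun n => rAB (Pnear A x n.+1%:R^-1) (Pnear A' x' n.+1%:R^-1)) @ \oo --> `|a - a'|.
Proof.
move=> Pa Pa' shr shr'; apply/cvgrPdist_le => e e0.
have e2 : 0 < e / 2 by rewrite divr_gt0.
have [d d0 Pd] := shr _ e2; have [d' d'0 Pd'] := shr' _ e2.
apply: filterS2 (near_natSinv_le d0) (near_natSinv_le d'0) => n le_d le_d'.
have ge_aa' : `|a - a'| <= rAB (Pnear A x n.+1%:R^-1) (Pnear A' x' n.+1%:R^-1).
  apply: ub_le_sup; first exact: Pnear_pair_dist_ubound.
  by exists a; [apply: Pbest_Pnear | exists a'; first apply: Pbest_Pnear].
have le_aa' : rAB (Pnear A x n.+1%:R^-1) (Pnear A' x' n.+1%:R^-1) <= `|a - a'| + e.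
  apply: ge_sup.
    by exists `|a - a'|, a; [apply: Pbest_Pnear | exists a'; first apply: Pbest_Pnear].
  move=> _ [y Py [y' Py' <-]].
  have := Pd y (Pnear_le le_d Py); have := Pd' y' (Pnear_le le_d' Py').
  have := ler_distD a y y'; have := ler_distD a' a y'.
  rewrite [`|a' - y'|]distrC; lra.
by rewrite ler_norml; move: ge_aa' le_aa'; lra.
Qed.

End NearestPoints.

Section UnitSphere.
Context {R : realType} {X : normedModType R}.
Implicit Types x z : X.

Lemma norm_sub_normalize x : x != 0 -> `|x - `|x|^-1 *: x| = `| `|x| - 1|.
Proof.
move=> x0; rewrite -{1}(scale1r x) -scalerBl normrZ.
by rewrite -{2}(normr_id x) -normrM mulrBl mul1r mulVf ?normr_eq0.
Qed.

Lemma normalize_sphere x : x != 0 -> unit_sphere (`|x|^-1 *: x).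
Proof.
move=> x0; rewrite /unit_sphere /= normrZ normrV ?unitfE ?normr_eq0 //.
by rewrite normr_id mulVf ?normr_eq0.
Qed.

Lemma dist_unit_sphere x : x != 0 -> dist_set unit_sphere x = `| `|x| - 1|.
Proof.
move=> x0; apply/le_anti/andP; split.
  by rewrite -norm_sub_normalize //; apply/dist_set_le/normalize_sphere.
apply: lb_le_inf.
  by exists `|x - `|x|^-1 *: x|, (`|x|^-1 *: x) => //; exact: normalize_sphere.
by move=> _ [z z1 <-]; rewrite -z1; apply: ler_dist_dist.
Qed.

Lemma Pbest_normalize x : x != 0 -> Pbest unit_sphere x (`|x|^-1 *: x).
Proof.
move=> x0; split; first exact: normalize_sphere.
by rewrite addr0 dist_unit_sphere // norm_sub_normalize.
Qed.

Lemma sphere_midpoint_defect_le x : x != 0 -> exists2 m : R, 0 < m &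
  forall z, unit_sphere z ->
    m * (2 - `|z + `|x|^-1 *: x|) <= `|x - z| - `|x - `|x|^-1 *: x|.
Proof.
move=> x0; set u := `|x|^-1 *: x; set t := `|x|.
have t0 : 0 < t by rewrite normr_gt0.
have xE : x = t *: u by rewrite /u scalerA mulfV ?gt_eqF // scale1r.
have u1 : `|u| = 1 := normalize_sphere x0.
rewrite norm_sub_normalize // -/t.
have [t1|t1] := leP 1 t.
- exists 1 => // z z1; rewrite ger0_norm ?subr_ge0 //.
  have : `|(t + 1) *: u| <= `|x - z| + `|z + u|.
    by rewrite (le_trans _ (ler_normD _ _)) // addrA subrK {1}xE scalerDl scale1r.
  by rewrite normrZ u1 mulr1 (@ger0_norm _ (t + 1)); lra.
- exists t => // z z1; rewrite (@ler0_norm _ (t - 1)); last by rewrite subr_le0 ltW.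
  have : `|(1 + t) *: z| <= `|t *: (z + u)| + `|z - x|.
    rewrite (le_trans _ (ler_normD _ _)) // scalerDr -xE scalerDl scale1r.
    by rewrite addrC -addrA (addrC x) subrK.
  rewrite distrC !normrZ z1 mulr1 normr_id -/t (@ger0_norm _ (1 + t)); lra.
Qed.

Lemma LUR_minimizing_cvg x (y : nat -> X) : @LUR R X -> x != 0 ->
  minimizing_seq unit_sphere x y -> y @ \oo --> `|x|^-1 *: x.
Proof.
move=> lur x0 [y1 cvy]; set u := `|x|^-1 *: x.
have [m m0 defect_le] := sphere_midpoint_defect_le x0.
apply: lur => //; first exact: normalize_sphere.
apply/cvgrPdist_le => e e0.
have me0 : 0 < 2 * m * e by rewrite !mulr_gt0.
move/cvgrPdist_le: cvy => /(_ _ me0); apply: filterS => n.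
rewrite dist_unit_sphere // -norm_sub_normalize // -/u => le_me.
have : 2 - `|y n + u| <= 2 * e.
  rewrite -(ler_pM2l m0); apply: le_trans (defect_le _ (y1 n)) _.
  by move: le_me; rewrite ler_norml mulrA; lra.
have : `|y n + u| <= 2 by rewrite (le_trans (ler_normD _ _)) // y1 normalize_sphere.
rewrite normrZ ger0_norm ?invr_ge0 // ler_norml; lra.
Qed.

Lemma minimizing_cvg_LUR :
  (forall x, x != 0 -> forall y : nat -> X,
     minimizing_seq unit_sphere x y -> y @ \oo --> `|x|^-1 *: x) -> @LUR R X.
Proof.
move=> mincvg x xn x1 xn1 mid1.
pose m n := 2^-1 *: (xn n + x).
pose w n := if m n == 0 then x else `|m n|^-1 *: m n.
have w1 n : unit_sphere (w n).
  by rewrite /w; case: eqP => // /eqP; apply: normalize_sphere.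
have mw n : `|m n - w n| = `|1 - `|m n| |.
  rewrite /w; case: eqP => [->|/eqP mn0]; last by rewrite norm_sub_normalize // distrC.
  by rewrite sub0r normrN x1 normr0 subr0 normr1.
have x0 : x != 0 by rewrite -normr_eq0 x1 oner_neq0.
have h0 : 2^-1 *: x != 0 by rewrite scaler_eq0 invr_eq0 pnatr_eq0 (negPf x0).
have nh : `|2^-1 *: x| = 2^-1 by rewrite normrZ x1 mulr1 ger0_norm // invr_ge0.
have hm n : `|2^-1 *: x - m n| = 2^-1.
  by rewrite /m scalerDr opprD addrCA subrr addr0 normrN normrZ xn1 mulr1 ger0_norm.
have cvw : w @ \oo --> x.
  have <- : `|2^-1 *: x|^-1 *: (2^-1 *: x) = x by rewrite nh scalerA mulVf // scale1r.
  apply: mincvg => //; split => //; rewrite dist_unit_sphere // nh.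
  apply/cvgrPdist_le => e e0; move/cvgrPdist_le: mid1 => /(_ e e0).
  apply: filterS => n le_e.
  have -> : `|2^-1 - 1| = `|2^-1 *: x - m n| :> R by rewrite hm distrC ger0_norm; lra.
  apply: le_trans (ler_dist_dist _ _) _.
  by rewrite opprB addrC addrA subrK distrC mw.
apply/cvgrPdist_le => e e0.
have e4 : 0 < e / 4 by rewrite divr_gt0.
move/cvgrPdist_le: cvw => /(_ _ e4) near_w.
move/cvgrPdist_le: mid1 => /(_ _ e4) near_m.
apply: filterS2 near_w near_m => n le_w le_m.
have -> : x - xn n = 2 *: (x - m n).
  rewrite scalerBr scalerA mulfV ?pnatr_eq0 // scale1r scaler_nat mulr2n.
  by rewrite opprD addrACA subrr addr0.
have := ler_distD (w n) x (m n); rewrite normrZ ger0_norm // [`|w n - m n|]distrC mw.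
lra.
Qed.

End UnitSphere.

Theorem corollary3p8 (R : realType) (X : completeNormedModType R) :
  [<-> @LUR R X;
   (forall x x' : X, x != 0 -> x' != 0 ->
      (fun n : nat => rAB (Pnear unit_sphere x (n.+1%:R)^-1)
                          (Pnear unit_sphere x' (n.+1%:R)^-1))
        @ \oo --> Num.norm (`|x|^-1 *: x - `|x'|^-1 *: x'));
   (forall x : X, x != 0 ->
      (fun n : nat => diam (Pnear unit_sphere x (n.+1%:R)^-1)) @ \oo --> (0 : R));
   (forall x : X, x != 0 -> forall y : nat -> X,
      minimizing_seq unit_sphere x y -> y @ \oo --> `|x|^-1 *: x);
   (forall x : X, x != 0 ->
      Pbest unit_sphere x = [set `|x|^-1 *: x] /\
      vietoris_cvg (fun n : nat => Pnear unit_sphere x (n.+1%:R)^-1)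
                   (Pbest unit_sphere x));
   (forall x : X, x != 0 ->
      Pbest unit_sphere x = [set `|x|^-1 *: x] /\
      hausdorff_cvg (fun n : nat => Pnear unit_sphere x (n.+1%:R)^-1)
                    (Pbest unit_sphere x));
   strongly_chebyshev_on (@unit_sphere R X) [set x | x != 0]].
Proof.
have u_best x : x != 0 -> Pbest unit_sphere x (`|x|^-1 *: x) := @Pbest_normalize R X x.
tfae.
- move=> lur x x' x0 x'0.
  have shr (z : X) : z != 0 -> Pnear_shrinks_to unit_sphere z (`|z|^-1 *: z).
    by move=> z0; apply: minimizing_cvg_shrinks => y; apply: LUR_minimizing_cvg.
  by apply: shrinks_rAB; (apply: u_best || apply: shr).
- by move=> rAB_cvg x x0; have := rAB_cvg x x x0 x0; rewrite subrr normr0.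
- move=> diam_cvg0 x x0; apply/shrinks_minimizing_cvg/diam_cvg0_shrinks/diam_cvg0 => //.
  exact: u_best.
- move=> mincvg x x0; have shr := minimizing_cvg_shrinks (mincvg x x0).
  have PB := shrinks_Pbest (u_best x x0) shr.
  by rewrite PB; split => //; apply: shrinks_vietoris => //; apply: u_best.
- move=> vietoris x x0; have [PB V] := vietoris x x0; rewrite PB in V *.
  by split => //; apply: shrinks_hausdorff (vietoris_shrinks V); apply: u_best.
- move=> hausdorff x x0; have [PB H] := hausdorff x x0; rewrite PB in H.
  exact: shrinks_chebyshev PB (hausdorff_shrinks H) x erefl.
- move=> cheb; apply: minimizing_cvg_LUR => x x0.
  exact/shrinks_minimizing_cvg/(chebyshev_shrinks x0 (u_best x x0) cheb).
Qed.
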